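(* Let $N=2^\ell$ ($\ell$ a positive integer), $\omega=e^{2\pi\mathbf{i}/N}$, $C_2\subseteq C_1\subseteq\mathbb{F}_2^n$ linear codes, $y_x,y_z\in\mathbb{F}_2^n$, $Q=Q(C_1,C_2,y_x,y_z)$ and $Q'=Q(C_1,C_2,0,0)$. Let $b\in\mathbb{Z}_N^n$ with $U(b)Q=Q$, and let $U'=\omega^{y_z\cdot b}U(b_{y_z})$, where $(b_{y_z})_i=b_i$ if $(y_z)_i=0$ and $(b_{y_z})_i=-b_i$ if $(y_z)_i=1$. Fix an encoding $\{w_1,\ldots,w_K\}$, used for both $Q$ and $Q'$. Then: (1) the logical action of $U(b)$ on $Q$ equals the logical action of $U'$ on $Q'$; (2) if the logical action of $U(b)$ on $Q$ is transversal, then the logical action of $U'$ on $Q'$ is transversal; (3) if $U(b)$ acts as the identity on $Q$, then $U'$ acts as the identity on $Q'$.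
   Context: Vectors of $\mathbb{F}_2^n$ are lifted to $\{0,1\}^n$ and $b\cdot x=\sum_ib_ix_i\bmod N$. $U(a)=\mathrm{diag}(1,\omega^a)$ for $a\in\mathbb{Z}_N$ and $U(b)=\bigotimes_iU(b_i)$. The CSS code $Q(C_1,C_2,y_x,y_z)$ is the subspace of $(\mathbb{C}^2)^{\otimes n}$ stabilized by all $(-1)^{y_x\cdot u+y_z\cdot v}X(u)Z(v)$, $u\in C_2$, $v\in C_1^\perp$ ($X(u)=\bigotimes X^{u_i}$, $Z(v)=\bigotimes Z^{v_i}$). An encoding is a set $\{w_1,\ldots,w_K\}\subseteq C_1$ whose classes form a basis of $C_1/C_2$; the logical states of $Q(C_1,C_2,y_x,y_z)$ are $|v\rangle_L=|C_2|^{-1/2}\sum_{u\in C_2}(-1)^{y_x\cdot u}|u+y_z+\sum_iv_iw_i\rangle$, $v\in\mathbb{F}_2^K$. The logical action of a unitary $U$ fixing the code is $\mathcal{E}^{-1}U\mathcal{E}$ on $(\mathbb{C}^2)^{\otimes K}$ where $\mathcal{E}:|v\rangle\mapsto|v\rangle_L$; it is transversal if it equals $\bigotimes_{i=1}^KE_i$ for unitary $E_i\in\mathbb{C}^{2\times2}$. *)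

From HB Require Import structures.
From mathcomp Require Import all_boot all_order all_algebra.
From mathcomp Require Import complex.
From mathcomp Require Import reals trigo.
Unset Printing Implicit Defensive.
Import Order.TTheory GRing.Theory Num.Theory.
Local Open Scope ring_scope.
Local Open Scope complex_scope.

Definition omega (R : realType) (N : nat) : R[i] :=
  (cos (2 * pi / N%:R))%:C + 'i * (sin (2 * pi / N%:R))%:C.

Definition state (R : realType) (n : nat) := 'rV['F_2]_n -> R[i].

Definition liftZ (N : nat) (a : 'F_2) : 'Z_N := (val a)%:R.

Definition dotZ (N n : nat) (b : 'I_n -> 'Z_N) (x : 'rV['F_2]_n) : 'Z_N :=
  \sum_(i < n) b i * liftZ N (x ord0 i).

(* U(b) = tensor_i diag(1, omega^{b_i}) : |x> |-> omega^{b.x} |x> *)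
Definition Uop (R : realType) (N n : nat) (b : 'I_n -> 'Z_N) (psi : state R n)
  : state R n := fun x => omega R N ^+ (val (dotZ N n b x)) * psi x.

Definition dot2 (n : nat) (y u : 'rV['F_2]_n) : 'F_2 := \sum_(i < n) y ord0 i * u ord0 i.

Definition sgn2 (R : realType) (a : 'F_2) : R[i] := (-1) ^+ (val a).

(* X(u) |x> = |x+u>, so (X(u) psi)(x) = psi(x+u) *)
Definition Xop (R : realType) (n : nat) (u : 'rV['F_2]_n) (psi : state R n) : state R n :=
  fun x => psi (x + u).
Definition Zop (R : realType) (n : nat) (v : 'rV['F_2]_n) (psi : state R n) : state R n :=
  fun x => sgn2 R (dot2 n v x) * psi x.

Definition in_dual (n : nat) (C : {vspace 'rV['F_2]_n}) (v : 'rV['F_2]_n) : Prop :=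
  forall c, c \in C -> dot2 n c v = 0.

Definition in_code (R : realType) (n : nat) (C1 C2 : {vspace 'rV['F_2]_n})
  (yx yz : 'rV['F_2]_n) (psi : state R n) : Prop :=
  forall u v, u \in C2 -> in_dual n C1 v ->
    (fun x => sgn2 R (dot2 n yx u + dot2 n yz v) * Xop R n u (Zop R n v psi) x) = psi.

Definition fixes_code (R : realType) (n : nat) (U : state R n -> state R n)
  (Q : state R n -> Prop) : Prop :=
  (forall psi, Q psi -> Q (U psi)) /\ (forall phi, Q phi -> exists psi, Q psi /\ U psi = phi).

Definition comb (n K : nat) (w : 'I_K -> 'rV['F_2]_n) (v : 'rV['F_2]_K) : 'rV['F_2]_n :=
  \sum_(i < K) v ord0 i *: w i.

(* {w_1..w_K} subset C1 whose classes form a basis of C1/C2 *)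
Definition is_encoding (n K : nat) (C1 C2 : {vspace 'rV['F_2]_n}) (w : 'I_K -> 'rV['F_2]_n)
  : Prop :=
  [/\ forall i, w i \in C1,
      forall c, c \in C1 -> exists v, c - comb n K w v \in C2 &
      forall v, comb n K w v \in C2 -> v = 0].

Definition lstate (R : realType) (n K : nat) (C2 : {vspace 'rV['F_2]_n})
  (yx yz : 'rV['F_2]_n) (w : 'I_K -> 'rV['F_2]_n) (v : 'rV['F_2]_K) : state R n :=
  fun x => ((Num.sqrt (#|[pred u : 'rV['F_2]_n | u \in C2]|%:R : R))^-1)%:C *
    \sum_(u : 'rV['F_2]_n | u \in C2) sgn2 R (dot2 n yx u) * (x == u + yz + comb n K w v)%:R.

Definition encode (R : realType) (n K : nat) (C2 : {vspace 'rV['F_2]_n})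
  (yx yz : 'rV['F_2]_n) (w : 'I_K -> 'rV['F_2]_n) (phi : state R K) : state R n :=
  fun x => \sum_(v : 'rV['F_2]_K) phi v * lstate R n K C2 yx yz w v x.

(* L is the logical action E^{-1} U E, i.e. E o L = U o E (E is injective) *)
Definition is_logical_action (R : realType) (n K : nat) (C2 : {vspace 'rV['F_2]_n})
  (yx yz : 'rV['F_2]_n) (w : 'I_K -> 'rV['F_2]_n) (U : state R n -> state R n)
  (L : state R K -> state R K) : Prop :=
  forall phi, encode R n K C2 yx yz w (L phi) = U (encode R n K C2 yx yz w phi).

Definition unitary2 (R : realType) (E : 'M[R[i]]_2) : Prop :=
  E *m (map_mx Num.conj E)^T = 1%:M.

Definition tensor_op (R : realType) (K : nat) (E : 'I_K -> 'M[R[i]]_2) (phi : state R K)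
  : state R K :=
  fun v => \sum_(u : 'rV['F_2]_K) (\prod_(i < K) E i (v ord0 i) (u ord0 i)) * phi u.

Definition transversal_action (R : realType) (K : nat) (L : state R K -> state R K) : Prop :=
  exists E : 'I_K -> 'M[R[i]]_2, (forall i, unitary2 R (E i)) /\ forall phi, L phi = tensor_op R K E phi.

Definition bflip (N n : nat) (yz : 'rV['F_2]_n) (b : 'I_n -> 'Z_N) : 'I_n -> 'Z_N :=
  fun i => if yz ord0 i == 1 then - b i else b i.

Definition Uprime (R : realType) (N n : nat) (yz : 'rV['F_2]_n) (b : 'I_n -> 'Z_N)
  (psi : state R n) : state R n :=
  fun x => omega R N ^+ (val (dotZ N n b yz)) * Uop R N n (bflip N n yz b) psi x.

From HB Require Import structures.
From mathcomp Require Import all_boot all_order all_algebra.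
From mathcomp Require Import complex.
From mathcomp Require Import reals trigo.
From mathcomp Require Import ring.
From mathcomp.classical Require Import boolp.
Import GRing.Theory Num.Theory.
Local Open Scope ring_scope.
Local Open Scope complex_scope.

(* Both logical actions are the same diagonal phase [|v> |-> omega^(b . (yz + sum_i v_i w_i))|v>].
   For [U(b)]: since [U(b)] preserves [Q], the stabilizers [X(u)], [u \in C2], force the phase
   [omega^(b . x)] to be constant on each coset [yz + sum_i v_i w_i + C2] supporting [|v>_L].
   For [U']: flipping the signs of [b] on the support of [yz] makes [U'] the conjugate of [U(b)]
   by [X(yz)], whose phase is constant on the cosets [sum_i v_i w_i + C2] supporting the logical
   states of [Q'], with the same values.  For (3), [X(yz) Z(yx)] carries [Q'] into [Q]
   and intertwines [U'] with [U(b)]. *)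

Lemma F2_cases (a : 'F_2) : a = 0 \/ a = 1.
Proof. by case: a => [[|[|//]] ?]; [left | right]; apply: val_inj. Qed.

Lemma F2_addxx (a : 'F_2) : a + a = 0.
Proof. exact/addrr_pchar2/pchar_Fp. Qed.

Lemma rowF2_addxx n (y : 'rV['F_2]_n) : y + y = 0.
Proof. by apply/matrixP => i j; rewrite !mxE F2_addxx. Qed.

Section Sign.
Variable R : realType.

Lemma sgn2_0 : sgn2 R 0 = 1.
Proof. by rewrite /sgn2 expr0. Qed.

Lemma sgn2D a b : sgn2 R (a + b) = sgn2 R a * sgn2 R b.
Proof.
by case: (F2_cases a) => ->; case: (F2_cases b) => ->;
  rewrite ?F2_addxx ?addr0 ?add0r ?sgn2_0 ?mul1r ?mulr1 // /sgn2 /= expr1 mulrNN mulr1.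
Qed.

Lemma sgn2_mul_self a : sgn2 R a * sgn2 R a = 1.
Proof. by rewrite -sgn2D F2_addxx sgn2_0. Qed.

Lemma sgn2_neq0 a : sgn2 R a != 0.
Proof.
apply/eqP => s0; have := sgn2_mul_self a.
by rewrite s0 mul0r => /eqP; rewrite eq_sym oner_eq0.
Qed.

End Sign.

Section Dot2.
Context {n : nat}.
Implicit Types y u : 'rV['F_2]_n.

Lemma dot2C y u : dot2 n y u = dot2 n u y.
Proof. by apply: eq_bigr => i _; rewrite mulrC. Qed.

Lemma dot2D y u u' : dot2 n y (u + u') = dot2 n y u + dot2 n y u'.
Proof. by rewrite /dot2 -big_split; apply: eq_bigr => i _; rewrite mxE mulrDr. Qed.

Lemma dot2_0r y : dot2 n y 0 = 0.
Proof. by rewrite /dot2 big1 // => i _; rewrite mxE mulr0. Qed.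

Lemma dot2_0l y : dot2 n 0 y = 0.
Proof. by rewrite dot2C dot2_0r. Qed.

End Dot2.

Lemma mul_liftZD N (z : 'Z_N) (a c : 'F_2) :
  z * liftZ N (a + c) = z * liftZ N c + (if c == 1 then - z else z) * liftZ N a.
Proof.
case: (F2_cases a) => ->; case: (F2_cases c) => ->;
  rewrite ?F2_addxx ?addr0 ?add0r /liftZ /= ?mulr0 ?mulr1 ?addr0 ?add0r //.
by rewrite subrr.
Qed.

(* Where [yz_i = 1], the lift of [t_i + 1] to [Z_N] is [1 - t_i]. *)
Lemma dotZ_bflip N n (b : 'I_n -> 'Z_N) (yz t : 'rV['F_2]_n) :
  dotZ N n b (t + yz) = dotZ N n b yz + dotZ N n (bflip N n yz b) t.
Proof. by rewrite /dotZ -big_split; apply: eq_bigr => i _; rewrite mxE mul_liftZD. Qed.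

Section Omega.
Variable R : realType.

Definition expi (t : R) : R[i] := (cos t)%:C + 'i * (sin t)%:C.

Lemma expiE t : expi t = (cos t +i* sin t)%C.
Proof. by rewrite /expi; simpc. Qed.

Lemma expiD s t : expi s * expi t = expi (s + t).
Proof. by rewrite !expiE cosD sinD; simpc; congr (_ +i* _); rewrite addrC. Qed.

Lemma expiXn t k : expi t ^+ k = expi (k%:R * t).
Proof.
elim: k => [|k IH]; first by rewrite expr0 mul0r expiE cos0 sin0.
by rewrite exprS IH expiD mulrSr mulrDl mul1r addrC.
Qed.

Lemma omega_expN N : (0 < N)%N -> omega R N ^+ N = 1.
Proof.
move=> N_gt0; rewrite [omega R N]/(expi _) expiXn mulrCA mulfV ?pnatr_eq0 -?lt0n //.
by rewrite mulr1 expiE mulr_natl cos2pi sin2pi.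
Qed.

Lemma omega_expZD N (a b : 'Z_N) : (1 < N)%N ->
  omega R N ^+ val (a + b) = omega R N ^+ val a * omega R N ^+ val b.
Proof.
move=> N_gt1; have period : omega R N ^+ (Zp_trunc N).+2 = 1.
  by rewrite Zp_cast // omega_expN // ltnW.
rewrite [val (a + b)]/= -exprD {2}(divn_eq (val a + val b) (Zp_trunc N).+2).
by rewrite exprD mulnC exprM period expr1n mul1r.
Qed.

Lemma UprimeE N n (yz : 'rV['F_2]_n) (b : 'I_n -> 'Z_N) psi x : (1 < N)%N ->
  Uprime R N n yz b psi x = omega R N ^+ val (dotZ N n b (x + yz)) * psi x.
Proof. by move=> N_gt1; rewrite /Uprime /Uop mulrA -omega_expZD // -dotZ_bflip. Qed.

End Omega.

Lemma sum_indicator_shift (V : finZmodType) (S : pzSemiRingType) (P : pred V)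
    (f : V -> S) (x a : V) :
  \sum_(u | P u) f u * (x == u + a)%:R = if P (x - a) then f (x - a) else 0.
Proof.
have eq_shift u : (x == u + a) = (u == x - a).
  by apply/eqP/eqP => [->|->]; rewrite ?addrK ?subrK.
under eq_bigr do rewrite eq_shift.
case: ifPn => Pxa; last first.
  rewrite big1 // => u Pu; rewrite (_ : u == x - a = false) ?mulr0 //.
  by apply: contraNF Pxa => /eqP <-.
rewrite (bigD1 (x - a)) //= eqxx mulr1 big1 ?addr0 // => u /andP[_ /negbTE ->].
by rewrite mulr0.
Qed.

Section Encoding.
Context {R : realType} {n K : nat} {C1 C2 : {vspace 'rV['F_2]_n}} {w : 'I_K -> 'rV['F_2]_n}.
Implicit Types (yx yz x u : 'rV['F_2]_n) (v : 'rV['F_2]_K) (phi : state R K).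

Definition code_norm : R[i] :=
  ((Num.sqrt (#|[pred u : 'rV['F_2]_n | u \in C2]|%:R : R))^-1)%:C.

Definition coset_sign yx a x : R[i] :=
  if x - a \in C2 then sgn2 R (dot2 n yx (x - a)) else 0.

Lemma code_norm_neq0 : code_norm != 0.
Proof.
have C2_gt0 : (0 < #|[pred u : 'rV['F_2]_n | u \in C2]|)%N.
  by apply/card_gt0P; exists 0; rewrite inE mem0v.
by rewrite /code_norm eq_complex /= eqxx andbT invr_eq0 sqrtr_eq0 lern0 -lt0n C2_gt0.
Qed.

Lemma lstateE yx yz v x :
  lstate R n K C2 yx yz w v x = code_norm * coset_sign yx (yz + comb n K w v) x.
Proof. by rewrite /lstate; under eq_bigr do rewrite -addrA; rewrite sum_indicator_shift. Qed.

Lemma combB v v' : comb n K w (v - v') = comb n K w v - comb n K w v'.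
Proof. by rewrite /comb -sumrB; apply: eq_bigr => i _; rewrite !mxE scalerBl. Qed.

Lemma comb_memv v : (forall i, w i \in C1) -> comb n K w v \in C1.
Proof. by move=> w_C1; apply: memv_suml => i _; apply: memvZ. Qed.

Lemma lstate_in_code yx yz v : (C2 <= C1)%VS -> (forall i, w i \in C1) ->
  in_code R n C1 C2 yx yz (lstate R n K C2 yx yz w v).
Proof.
move=> C21 w_C1 u0 v0 u0_C2 v0_dual; apply: funext => x /=.
set c := comb n K w v; rewrite /Xop /Zop !lstateE /coset_sign addrAC (rpredDr _ u0_C2).
case: ifP => x_coset; last by rewrite !mulr0.
have xu0_C1 : x + u0 - yz \in C1.
  have -> : x + u0 - yz = x - (yz + c) + u0 + c by rewrite [RHS]addrAC opprD addrA subrK addrAC.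
  by apply/memvD/comb_memv => //; apply/memvD; apply: (subvP C21).
have -> : dot2 n v0 (x + u0) = dot2 n yz v0.
  by rewrite -[x + u0](subrK yz) dot2D dot2C (v0_dual _ xu0_C1) add0r dot2C.
rewrite (dot2D yx (x - _) u0) !sgn2D -[RHS]mul1r -(sgn2_mul_self R (dot2 n yx u0)).
rewrite -[RHS]mul1r -(sgn2_mul_self R (dot2 n yz v0)).
by ring.
Qed.

Hypothesis w_enc : is_encoding n K C1 C2 w.

(* The cosets [yz + comb v + C2] are disjoint, so only [|v>_L] is nonzero at [yz + comb v]. *)
Lemma encode_rep yx yz phi v :
  encode R n K C2 yx yz w phi (yz + comb n K w v) = code_norm * phi v.
Proof.
case: w_enc => _ _ comb_inj; rewrite /encode (bigD1 v) //= big1 ?addr0.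
  by rewrite lstateE /coset_sign subrr mem0v dot2_0r sgn2_0 mulr1 mulrC.
move=> v' v'_neq; rewrite lstateE /coset_sign.
rewrite opprD addrACA subrr add0r -combB.
case: ifP => [/comb_inj /eqP|]; last by rewrite !mulr0.
by rewrite subr_eq0 eq_sym (negbTE v'_neq).
Qed.

Lemma encode_inj yx yz : injective (encode R n K C2 yx yz w).
Proof.
move=> phi psi eq_enc; apply: funext => v.
have := congr1 (fun f => f (yz + comb n K w v)) eq_enc => /=.
by rewrite !encode_rep; apply: mulfI; apply: code_norm_neq0.
Qed.

Lemma logical_actionP {yx yz U M} :
  (forall phi, U (encode R n K C2 yx yz w phi) = encode R n K C2 yx yz w (M phi)) ->
  forall L, is_logical_action R n K C2 yx yz w U L <-> forall phi, L phi = M phi.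
Proof.
move=> UM L; split=> [L_act phi | LM phi]; last by rewrite LM UM.
by apply: (@encode_inj yx yz); rewrite L_act UM.
Qed.

Lemma encode_diag yx yz (d : 'rV['F_2]_n -> R[i]) phi :
  (forall v u, u \in C2 -> d (u + (yz + comb n K w v)) = d (yz + comb n K w v)) ->
  (fun x => d x * encode R n K C2 yx yz w phi x) =
  encode R n K C2 yx yz w (fun v => d (yz + comb n K w v) * phi v).
Proof.
move=> d_coset; apply: funext => x; rewrite /encode mulr_sumr; apply: eq_bigr => v _.
rewrite lstateE /coset_sign; case: ifP => x_coset; last by rewrite !mulr0.
by rewrite -(d_coset v _ x_coset) subrK mulrA.
Qed.

(* Evaluate the stabilizer condition [X(u) U(b)|v>_L = (-1)^(yx.u) U(b)|v>_L] at [yz + comb v]. *)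
Lemma Uop_phase_coset {N yx yz} {b : 'I_n -> 'Z_N} v u :
  (C2 <= C1)%VS -> (forall psi, in_code R n C1 C2 yx yz psi ->
                                in_code R n C1 C2 yx yz (Uop R N n b psi)) ->
  u \in C2 ->
  omega R N ^+ val (dotZ N n b (u + (yz + comb n K w v))) =
  omega R N ^+ val (dotZ N n b (yz + comb n K w v)).
Proof.
case: w_enc => w_C1 _ _ C21 U_code u_C2.
have dual0 : in_dual n C1 0 by move=> c _; rewrite dot2_0r.
have := congr1 (fun f => f (yz + comb n K w v))
  (U_code _ (lstate_in_code yx yz v C21 w_C1) u 0 u_C2 dual0) => /=.
rewrite /Xop /Zop /Uop !lstateE /coset_sign dot2_0l dot2_0r addr0 sgn2_0 !mul1r.
rewrite subrr mem0v dot2_0r sgn2_0 [_ + u]addrC addrK u_C2 mulr1 => stab.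
apply: (mulIf code_norm_neq0); rewrite -stab.
move: (sgn2_mul_self R (dot2 n yx u)) (omega R N ^+ _) => ss1 W.
by rewrite -[LHS]mul1r -ss1; ring.
Qed.

Definition logical_phase {N} yz (b : 'I_n -> 'Z_N) phi : state R K :=
  fun v => omega R N ^+ val (dotZ N n b (yz + comb n K w v)) * phi v.

Lemma Uop_encode {N yx yz} {b : 'I_n -> 'Z_N} phi :
  (C2 <= C1)%VS -> (forall psi, in_code R n C1 C2 yx yz psi ->
                                in_code R n C1 C2 yx yz (Uop R N n b psi)) ->
  Uop R N n b (encode R n K C2 yx yz w phi) =
  encode R n K C2 yx yz w (logical_phase yz b phi).
Proof.
move=> C21 U_code; rewrite /Uop /logical_phase; apply: encode_diag => v u u_C2.
exact: (Uop_phase_coset v u C21 U_code u_C2).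
Qed.

Lemma Uprime_encode {N yx yz} {b : 'I_n -> 'Z_N} phi : (1 < N)%N ->
  (C2 <= C1)%VS -> (forall psi, in_code R n C1 C2 yx yz psi ->
                                in_code R n C1 C2 yx yz (Uop R N n b psi)) ->
  Uprime R N n yz b (encode R n K C2 0 0 w phi) =
  encode R n K C2 0 0 w (logical_phase yz b phi).
Proof.
move=> N_gt1 C21 U_code.
have -> : Uprime R N n yz b (encode R n K C2 0 0 w phi) =
    (fun x => omega R N ^+ val (dotZ N n b (x + yz)) * encode R n K C2 0 0 w phi x).
  by apply: funext => x; rewrite UprimeE.
rewrite encode_diag => [|v u u_C2].
  by congr encode; apply: funext => v; rewrite /logical_phase add0r addrC.
by rewrite !add0r -addrA [comb _ _ _ _ + _]addrC (Uop_phase_coset v u C21 U_code u_C2).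
Qed.

End Encoding.

Section Shift.
Context {R : realType} {n : nat} {C1 C2 : {vspace 'rV['F_2]_n}}.
Implicit Types (yx yz : 'rV['F_2]_n) (psi : state R n).

Definition code_shift yx yz psi : state R n := Xop R n yz (Zop R n yx psi).

Lemma in_code_shift yx yz psi :
  in_code R n C1 C2 0 0 psi -> in_code R n C1 C2 yx yz (code_shift yx yz psi).
Proof.
move=> psi_code u v u_C2 v_dual; apply: funext => z /=.
have := congr1 (fun f => f (z + yz)) (psi_code u v u_C2 v_dual) => /=.
rewrite /code_shift /Xop /Zop !dot2_0l addr0 sgn2_0 mul1r [z + u + yz]addrAC => <-.
rewrite !dot2D !sgn2D (dot2C v yz) -[RHS]mul1r -(sgn2_mul_self R (dot2 n yx u)).
by move: (psi _) => p; ring.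
Qed.

Lemma code_shift_inj yx yz : injective (code_shift yx yz).
Proof.
move=> psi phi eq_shift; apply: funext => x.
have := congr1 (fun f => f (x + yz)) eq_shift; rewrite /code_shift /Xop /Zop -addrA rowF2_addxx addr0.
exact/mulfI/sgn2_neq0.
Qed.

Lemma Uop_code_shift N yx yz (b : 'I_n -> 'Z_N) psi : (1 < N)%N ->
  Uop R N n b (code_shift yx yz psi) = code_shift yx yz (Uprime R N n yz b psi).
Proof.
move=> N_gt1; apply: funext => x.
by rewrite /code_shift /Xop /Zop /Uop UprimeE // -addrA rowF2_addxx addr0 mulrCA.
Qed.

End Shift.

Local Close Scope complex_scope.

Theorem corollary2p8 (R : realType) (l : nat) (hl : (0 < l)%N) (n K : nat)
  (C1 C2 : {vspace 'rV['F_2]_n}) (hC : (C2 <= C1)%VS)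
  (yx yz : 'rV['F_2]_n) (b : 'I_n -> 'Z_(2 ^ l))
  (hb : fixes_code R n (Uop R (2 ^ l) n b) (in_code R n C1 C2 yx yz))
  (w : 'I_K -> 'rV['F_2]_n) (hw : is_encoding n K C1 C2 w) :
  (* (1) *)
  ((exists L, is_logical_action R n K C2 yx yz w (Uop R (2 ^ l) n b) L) /\
   (forall L, is_logical_action R n K C2 yx yz w (Uop R (2 ^ l) n b) L <->
              is_logical_action R n K C2 0 0 w (Uprime R (2 ^ l) n yz b) L)) /\
  (* (2) *)
  ((forall L, is_logical_action R n K C2 yx yz w (Uop R (2 ^ l) n b) L -> transversal_action R K L) ->
   (forall L, is_logical_action R n K C2 0 0 w (Uprime R (2 ^ l) n yz b) L -> transversal_action R K L)) /\
  (* (3) *)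
  ((forall psi, in_code R n C1 C2 yx yz psi -> Uop R (2 ^ l) n b psi = psi) ->
   (forall psi, in_code R n C1 C2 0 0 psi -> Uprime R (2 ^ l) n yz b psi = psi)).
Proof.
have N_gt1 : (1 < 2 ^ l)%N by rewrite -{1}(expn0 2) ltn_exp2l.
have [U_code _] := hb.
have act_U := logical_actionP hw (fun phi => Uop_encode hw phi hC U_code).
have act_U' := logical_actionP hw (fun phi => Uprime_encode hw phi N_gt1 hC U_code).
have act_equiv L := iff_trans (act_U L) (iff_sym (act_U' L)).
split; [split | split].
- by eexists; apply/act_U.
- exact: act_equiv.
- by move=> transv L /act_equiv; apply: transv.
move=> U_id psi psi_code; apply: (code_shift_inj yx yz).
by rewrite -Uop_code_shift // U_id //; apply: in_code_shift.
Qed.
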